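(* Let $\Sigma$ be the set of all groupoid identities (in one binary operation, written as juxtaposition) that are satisfied by each of the four binary operations $x+y$, $x-y$, $-x+y$, $-x-y$ in every abelian group. Then the following six identities form an independent basis for $\Sigma$ (that is, every identity in $\Sigma$ is a consequence of them, they all lie in $\Sigma$, and none of them is a consequence of the other five): (M1) $(xy)(zt)=(xz)(yt)$; (M2) $(xy)(zt)=(ty)(zx)$; (M3) $((xy)z)t=((xt)z)y$; (M4) $(x(yz))t=(x(tz))y$; (M5) $x((yz)t)=z((yx)t)$; (M6) $x(y(zt))=z(y(xt))$.
   Context: A basis for a set of identities $\Sigma$ is a set of identities whose equational consequences are exactly $\Sigma$. *)

From HB Require Import structures.
From mathcomp Require Import all_boot all_algebra.
Set Implicit Arguments.
Unset Strict Implicit.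
Unset Printing Implicit Defensive.
Import GRing.Theory.
Local Open Scope ring_scope.

Inductive term : Type :=
| Var : nat -> term
| Op : term -> term -> term.

Definition identity := (term * term)%type.

Fixpoint eval (T : Type) (op : T -> T -> T) (v : nat -> T) (t : term) : T :=
  match t with
  | Var n => v n
  | Op t1 t2 => op (eval op v t1) (eval op v t2)
  end.

Definition satisfies (T : Type) (op : T -> T -> T) (e : identity) : Prop :=
  forall v : nat -> T, eval op v e.1 = eval op v e.2.

Fixpoint subst (s : nat -> term) (t : term) : term :=
  match t with
  | Var n => s n
  | Op t1 t2 => Op (subst s t1) (subst s t2)
  end.

(* equational consequence: the least fully invariant congruence on terms
   containing E (Birkhoff's rules of equational logic) *)
Inductive derivable (E : identity -> Prop) : term -> term -> Prop :=
| der_ax : forall e, E e -> forall s, derivable E (subst s e.1) (subst s e.2)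
| der_refl : forall t, derivable E t t
| der_sym : forall t u, derivable E t u -> derivable E u t
| der_trans : forall t u w, derivable E t u -> derivable E u w -> derivable E t w
| der_op : forall t1 t2 u1 u2, derivable E t1 u1 -> derivable E t2 u2 ->
    derivable E (Op t1 t2) (Op u1 u2).

Definition consequence (E : identity -> Prop) (e : identity) : Prop :=
  derivable E e.1 e.2.

Definition Sigma (e : identity) : Prop :=
  forall G : zmodType,
    [/\ satisfies (fun x y : G => x + y) e,
        satisfies (fun x y : G => x - y) e,
        satisfies (fun x y : G => - x + y) e &
        satisfies (fun x y : G => - x - y) e].

Definition vx := Var 0.
Definition vy := Var 1.
Definition vz := Var 2.
Definition vt := Var 3.

Definition M1 : identity := (Op (Op vx vy) (Op vz vt), Op (Op vx vz) (Op vy vt)).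
Definition M2 : identity := (Op (Op vx vy) (Op vz vt), Op (Op vt vy) (Op vz vx)).
Definition M3 : identity := (Op (Op (Op vx vy) vz) vt, Op (Op (Op vx vt) vz) vy).
Definition M4 : identity := (Op (Op vx (Op vy vz)) vt, Op (Op vx (Op vt vz)) vy).
Definition M5 : identity := (Op vx (Op (Op vy vz) vt), Op vz (Op (Op vy vx) vt)).
Definition M6 : identity := (Op vx (Op vy (Op vz vt)), Op vz (Op vy (Op vx vt))).

Definition Mfam (i : 'I_6) : identity :=
  match val i with
  | 0 => M1 | 1 => M2 | 2 => M3 | 3 => M4 | 4 => M5 | _ => M6
  end.

Definition Mset (e : identity) : Prop := exists i : 'I_6, e = Mfam i.

(* the set {M1,...,M6} minus M_(i+1) *)
Definition Mset_but (i : 'I_6) (e : identity) : Prop :=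
  exists j : 'I_6, j != i /\ e = Mfam j.

Definition basis_for (B Sig : identity -> Prop) : Prop :=
  forall e, consequence B e <-> Sig e.

(* Label each position of a term by the parities of the numbers of left and right
   steps on its path from the root.  Evaluating in the integers under the four
   operations shows that an identity lies in Sigma iff every variable occurs equally
   often in each of the four classes.  M1-M6 lie in Sigma; conversely they allow any
   two disjoint subterms whose positions have the same class to be exchanged, by
   induction on the depth of the positions, each step conjugating by at most three
   instances of M1-M6.  With these exchanges both sides of an identity of Sigma are
   brought to one of the head shapes x.u, u.x, (x.y).m, their head variables are
   matched, and the remaining subterms are compared recursively.  When the shapes
   differ, either one more exchange makes them agree, or a count of leaves against
   internal nodes of a fixed class shows that both sides are products of two variables.
   For independence, each Mi fails in a ten-element groupoid with zero that satisfies
   the other five identities. *)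

From mathcomp Require Import all_boot all_algebra zify.
Set Implicit Arguments.
Unset Strict Implicit.
Import GRing.Theory.

Local Notation der := (derivable Mset).

Lemma Mfam_der (i : 'I_6) (s : nat -> term) : der (subst s (Mfam i).1) (subst s (Mfam i).2).
Proof. exact: der_ax (ex_intro _ i erefl) s. Qed.

Definition subst4 (x y z t : term) (n : nat) : term := nth t [:: x; y; z] n.

Lemma M1_der x y z t : der (Op (Op x y) (Op z t)) (Op (Op x z) (Op y t)).
Proof. exact: (Mfam_der (@Ordinal 6 0 isT) (subst4 x y z t)). Qed.
Lemma M2_der x y z t : der (Op (Op x y) (Op z t)) (Op (Op t y) (Op z x)).
Proof. exact: (Mfam_der (@Ordinal 6 1 isT) (subst4 x y z t)). Qed.
Lemma M3_der x y z t : der (Op (Op (Op x y) z) t) (Op (Op (Op x t) z) y).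
Proof. exact: (Mfam_der (@Ordinal 6 2 isT) (subst4 x y z t)). Qed.
Lemma M4_der x y z t : der (Op (Op x (Op y z)) t) (Op (Op x (Op t z)) y).
Proof. exact: (Mfam_der (@Ordinal 6 3 isT) (subst4 x y z t)). Qed.
Lemma M5_der x y z t : der (Op x (Op (Op y z) t)) (Op z (Op (Op y x) t)).
Proof. exact: (Mfam_der (@Ordinal 6 4 isT) (subst4 x y z t)). Qed.
Lemma M6_der x y z t : der (Op x (Op y (Op z t))) (Op z (Op y (Op x t))).
Proof. exact: (Mfam_der (@Ordinal 6 5 isT) (subst4 x y z t)). Qed.

Lemma derL t t' u : der t t' -> der (Op t u) (Op t' u).
Proof. by move=> h; apply: der_op h (der_refl _ _). Qed.
Lemma derR t u u' : der u u' -> der (Op t u) (Op t u').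
Proof. exact: der_op (der_refl _ _). Qed.

Inductive ctx : Type := Hole | CL of ctx & term | CR of term & ctx.

Fixpoint plug (C : ctx) (u : term) : term :=
  match C with
  | Hole => u
  | CL C r => Op (plug C u) r
  | CR l C => Op l (plug C u)
  end.

Lemma der_plug C t u : der t u -> der (plug C t) (plug C u).
Proof. by move=> h; elim: C => //= [C IH r|l C IH]; [apply: derL | apply: derR]. Qed.

Fixpoint depth (C : ctx) : nat :=
  match C with Hole => 0 | CL C _ | CR _ C => (depth C).+1 end.

(* The class of a position: parities of its numbers of left and right steps. *)
Definition class := (bool * bool)%type.
Definition cadd (a b : class) : class := (a.1 (+) b.1, a.2 (+) b.2).
Notation c00 := (false, false).
Notation c10 := (true, false).
Notation c01 := (false, true).
Notation c11 := (true, true).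

Fixpoint ctx_class (C : ctx) : class :=
  match C with
  | Hole => c00
  | CL C _ => cadd c10 (ctx_class C)
  | CR _ C => cadd c01 (ctx_class C)
  end.

Definition compatible (C1 C2 : ctx) : bool :=
  cadd c10 (ctx_class C1) == cadd c01 (ctx_class C2).

Definition swappable (C1 C2 : ctx) : Prop :=
  forall X Z, der (Op (plug C1 X) (plug C2 Z)) (Op (plug C1 Z) (plug C2 X)).

Lemma swappable_via K D1 D2 C1 C2 : swappable D1 D2 ->
  (forall X Z, der (Op (plug C1 X) (plug C2 Z)) (plug K (Op (plug D1 X) (plug D2 Z)))) ->
  swappable C1 C2.
Proof.
move=> sw tr X Z; apply: der_trans (tr X Z) _.
by apply: der_trans (der_plug K (sw X Z)) _; apply: der_sym.
Qed.

Lemma swappable_via_flip K D1 D2 C1 C2 : swappable D1 D2 ->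
  (forall X Z, der (Op (plug C1 X) (plug C2 Z)) (plug K (Op (plug D1 Z) (plug D2 X)))) ->
  swappable C1 C2.
Proof.
move=> sw tr X Z; apply: der_trans (tr X Z) _.
by apply: der_trans (der_plug K (sw Z X)) _; apply: der_sym.
Qed.

(* In [swap_P_Q] the exchanged subterms sit at paths beginning with P and Q from the
   root (L = left, R = right). *)
Lemma swap_LLL c a1 a0 C2 : swappable c C2 -> swappable (CL (CL c a1) a0) C2.
Proof. by move/(swappable_via (K := CL (CL Hole a0) a1)); apply=> X Z; apply: M3_der. Qed.

Lemma swap_LRR a0 a1 c C2 : swappable C2 c -> swappable (CR a0 (CR a1 c)) C2.
Proof. by move/(swappable_via_flip (K := CL (CR a0 Hole) a1)); apply=> X Z; apply: M4_der. Qed.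

Lemma swap_RRR C1 b0 b1 c : swappable C1 c -> swappable C1 (CR b0 (CR b1 c)).
Proof. by move/(swappable_via (K := CR b1 (CR b0 Hole))); apply=> X Z; apply: M6_der. Qed.

Lemma swap_RLL C1 c b1 b0 : swappable c C1 -> swappable C1 (CL (CL c b1) b0).
Proof. by move/(swappable_via_flip (K := CR b1 (CL Hole b0))); apply=> X Z; apply: M5_der. Qed.

Lemma swap_LL_RL c1 a0 c2 b0 : swappable c1 c2 -> swappable (CL c1 a0) (CL c2 b0).
Proof. by move/(swappable_via (K := CL Hole (Op a0 b0))); apply=> X Z; apply: M1_der. Qed.

Lemma swap_LR_RR a0 c1 b0 c2 : swappable c1 c2 -> swappable (CR a0 c1) (CR b0 c2).
Proof. by move/(swappable_via (K := CR (Op a0 b0) Hole)); apply=> X Z; apply: M1_der. Qed.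

Lemma swap_LL_RRL c1 a0 b0 c2 b1 :
  swappable c2 (CR b0 c1) -> swappable (CL c1 a0) (CR b0 (CL c2 b1)).
Proof.
move/(swappable_via_flip (K := CL (CL Hole a0) b1)); apply=> X Z /=.
by apply: der_trans (M2_der _ _ _ _) (M3_der _ _ _ _).
Qed.

Lemma swap_LLR_RR a1 c1 a0 b0 c2 :
  swappable (CL c2 a0) c1 -> swappable (CL (CR a1 c1) a0) (CR b0 c2).
Proof.
move/(swappable_via_flip (K := CR a1 (CR b0 Hole))); apply=> X Z /=.
by apply: der_trans (M2_der _ _ _ _) (M6_der _ _ _ _).
Qed.

Lemma swap_LR_RLR a0 c1 b1 c2 b0 :
  swappable (CL c1 b0) c2 -> swappable (CR a0 c1) (CL (CR b1 c2) b0).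
Proof.
move/(swappable_via (K := CL (CR a0 Hole) b1)); apply=> X Z /=.
by apply: der_trans (M1_der _ _ _ _) (M4_der _ _ _ _).
Qed.

Lemma swap_LRL_RL a0 c1 a1 c2 b0 :
  swappable c1 (CR a0 c2) -> swappable (CR a0 (CL c1 a1)) (CL c2 b0).
Proof.
move/(swappable_via (K := CR a1 (CL Hole b0))); apply=> X Z /=.
by apply: der_trans (M1_der _ _ _ _) (M5_der _ _ _ _).
Qed.

Section SwapBaseCases.
Variables a0 a1 b0 b1 : term.

Lemma swap_L_RRL : swappable Hole (CR b0 (CL Hole b1)).
Proof. by move=> X Z; apply: M6_der. Qed.
Lemma swap_L_RLR : swappable Hole (CL (CR b1 Hole) b0).
Proof. by move=> X Z; apply: M5_der. Qed.
Lemma swap_LL_RR : swappable (CL Hole a0) (CR b0 Hole).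
Proof. by move=> X Z; apply: M2_der. Qed.
Lemma swap_LR_RL : swappable (CR a0 Hole) (CL Hole b0).
Proof. by move=> X Z; apply: M1_der. Qed.
Lemma swap_LLR_R : swappable (CL (CR a1 Hole) a0) Hole.
Proof. by move=> X Z; apply: M3_der. Qed.
Lemma swap_LRL_R : swappable (CR a0 (CL Hole a1)) Hole.
Proof. by move=> X Z; apply: M4_der. Qed.

End SwapBaseCases.

Section SwapRootLeaf.
Variables (a0 a1 a2 b0 b1 b2 : term) (c : ctx).

Lemma swap_L_RRLL : swappable Hole (CR b0 c) -> swappable Hole (CR b0 (CL (CL c b2) b1)).
Proof.
move/(swappable_via (K := CL (CL Hole b2) b1)); apply=> X Z /=.
apply: der_trans (M6_der _ _ _ _) _.
by apply: der_trans (M2_der _ _ _ _) (M3_der _ _ _ _).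
Qed.

Lemma swap_L_RRLR :
  swappable Hole (CL c (Op (Op b2 b0) b1)) -> swappable Hole (CR b0 (CL (CR b2 c) b1)).
Proof. by move/(swappable_via (K := Hole)); apply=> X Z; apply/derR/M5_der. Qed.

Lemma swap_L_RLRL :
  swappable Hole (CR (Op b1 (Op b0 b2)) c) -> swappable Hole (CL (CR b1 (CL c b2)) b0).
Proof. by move/(swappable_via (K := Hole)); apply=> X Z; apply/derR/M4_der. Qed.

Lemma swap_L_RLRR : swappable (CL c b0) Hole -> swappable Hole (CL (CR b1 (CR b2 c)) b0).
Proof.
move/(swappable_via_flip (K := CL (CR b2 Hole) b1)); apply=> X Z /=.
apply: der_trans (M5_der _ _ _ _) _.
by apply: der_trans (M1_der _ _ _ _) (M4_der _ _ _ _).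
Qed.

Lemma swap_LLRL_R :
  swappable (CR (Op a1 (Op a0 a2)) c) Hole -> swappable (CL (CR a1 (CL c a2)) a0) Hole.
Proof. by move/(swappable_via (K := Hole)); apply=> X Z; apply/derL/M4_der. Qed.

Lemma swap_LLRR_R : swappable (CL c a0) Hole -> swappable (CL (CR a1 (CR a2 c)) a0) Hole.
Proof.
move/(swappable_via (K := CR a1 (CR a2 Hole))); apply=> X Z /=.
apply: der_trans (M3_der _ _ _ _) _.
by apply: der_trans (M2_der _ _ _ _) (M6_der _ _ _ _).
Qed.

Lemma swap_LRLL_R : swappable Hole (CR a0 c) -> swappable (CR a0 (CL (CL c a2) a1)) Hole.
Proof.
move/(swappable_via_flip (K := CR a1 (CL Hole a2))); apply=> X Z /=.
apply: der_trans (M4_der _ _ _ _) _.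
by apply: der_trans (M1_der _ _ _ _) (M5_der _ _ _ _).
Qed.

Lemma swap_LRLR_R :
  swappable (CL c (Op (Op a2 a0) a1)) Hole -> swappable (CR a0 (CL (CR a2 c) a1)) Hole.
Proof. by move/(swappable_via (K := Hole)); apply=> X Z; apply/derL/M5_der. Qed.

End SwapRootLeaf.

Ltac class_cases :=
  rewrite /compatible /=;
  repeat match goal with |- context [ctx_class ?c] => case: (ctx_class c) => [[] []] end.

(* Unfolded to depth three, every compatible pair of contexts matches one of the lemmas
   above, whose premise is a strictly shallower compatible pair. *)
Lemma compatible_swappable C1 C2 : compatible C1 C2 -> swappable C1 C2.
Proof.
move: {2}(depth C1 + depth C2).+1 (ltnSn (depth C1 + depth C2)) => n.
elim: n C1 C2 => // n IHn C1 C2 Hn Hc.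
have IH D1 D2 : depth D1 + depth D2 < depth C1 + depth C2 ->
    compatible D1 D2 -> swappable D1 D2.
  by move=> ? ?; apply: IHn => //; lia.
clear IHn Hn.
case: C1 Hc IH => [|[|[|? ?|? ?] ?|? [|? ?|? ?]] ?|? [|[|? ?|? ?] ?|? [|? ?|? ?]]];
case: C2 => [|[|[|? ?|? ?] ?|? [|? ?|? ?]] ?|? [|[|? ?|? ?] ?|? [|? ?|? ?]]] Hc IH;
first [ by move: Hc; class_cases
      | exact: swap_L_RRL | exact: swap_L_RLR | exact: swap_LL_RR
      | exact: swap_LR_RL | exact: swap_LLR_R | exact: swap_LRL_R
      | (first [ apply: swap_LLL | apply: swap_LRR | apply: swap_RRR | apply: swap_RLL
               | apply: swap_LL_RL | apply: swap_LR_RR | apply: swap_LL_RRL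
               | apply: swap_LLR_RR | apply: swap_LR_RLR | apply: swap_LRL_RL
               | apply: swap_L_RRLL | apply: swap_L_RRLR | apply: swap_L_RLRL
               | apply: swap_L_RLRR | apply: swap_LLRL_R | apply: swap_LLRR_R
               | apply: swap_LRLL_R | apply: swap_LRLR_R ];
         by apply: IH; [rewrite /=; lia | move: Hc; class_cases]) ].
Qed.

Fixpoint leaf_count (w : nat -> nat) (t : term) (c : class) : nat :=
  match t with
  | Var x => if c == c00 then w x else 0
  | Op a b => leaf_count w a (cadd c10 c) + leaf_count w b (cadd c01 c)
  end.

Fixpoint node_count (t : term) (c : class) : nat :=
  match t with
  | Var _ => 0
  | Op a b => (c == c00) + node_count a (cadd c10 c) + node_count b (cadd c01 c)
  end.

Fixpoint leaves (t : term) : nat :=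
  match t with Var _ => 1 | Op a b => leaves a + leaves b end.

Definition class_equiv (s t : term) : Prop := forall w c, leaf_count w s c = leaf_count w t c.

Definition wall : nat -> nat := fun=> 1.
Definition wvar (x : nat) : nat -> nat := fun y => y == x.

Lemma caddK a c : cadd a (cadd a c) = c.
Proof. by case: a c => [[] []] [[] []]. Qed.

Lemma leavesE t : leaves t =
  leaf_count wall t c00 + leaf_count wall t c10 + leaf_count wall t c01 + leaf_count wall t c11.
Proof. by elim: t => //= a -> b ->; rewrite /cadd /=; lia. Qed.

Lemma leaves_gt0 t : 0 < leaves t.
Proof. by elim: t => //= a IHa b IHb; rewrite addn_gt0 IHa. Qed.

Lemma class_equiv_leaves s t : class_equiv s t -> leaves s = leaves t.
Proof. by move=> h; rewrite !leavesE !h. Qed.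

Lemma class_equiv_Var x y : class_equiv (Var x) (Var y) -> x = y.
Proof. by move/(_ (wvar x) c00); rewrite /= /wvar eqxx; case: eqP. Qed.

Lemma class_equiv_OpR a b b' : class_equiv (Op a b) (Op a b') -> class_equiv b b'.
Proof. by move=> h w c; move: (h w (cadd c01 c)) => /=; rewrite caddK => /addnI. Qed.

Lemma class_equiv_OpL a a' b : class_equiv (Op a b) (Op a' b) -> class_equiv a a'.
Proof. by move=> h w c; move: (h w (cadd c10 c)) => /=; rewrite caddK => /addIn. Qed.

Lemma leaf_count_plug w C u c :
  leaf_count w u (cadd (ctx_class C) c) <= leaf_count w (plug C u) c.
Proof.
elim: C c => [|C IH r|l C IH] c /=; first by case: c => [[] []].
- apply: leq_trans (leq_addr _ _); apply: leq_trans (IH _).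
  by case: (ctx_class C) c => [[] []] [[] []].
- apply: leq_trans (leq_addl _ _); apply: leq_trans (IH _).
  by case: (ctx_class C) c => [[] []] [[] []].
Qed.

Lemma leaf_count_leaf w C x : w x <= leaf_count w (plug C (Var x)) (ctx_class C).
Proof.
by apply: leq_trans (leaf_count_plug _ _ _ _) => /=; case: (ctx_class C) => [[] []].
Qed.

Lemma leaf_count_gt0 w t c : 0 < leaf_count w t c ->
  exists C x, [/\ t = plug C (Var x), ctx_class C = c & 0 < w x].
Proof.
elim: t c => [x|a IHa b IHb] c /=.
  by case: eqP => // -> wx; exists Hole, x.
rewrite addn_gt0 => /orP[/IHa[C [x [-> hC wx]]]|/IHb[C [x [-> hC wx]]]].
- by exists (CL C b), x; rewrite /= hC caddK.
- by exists (CR a C), x; rewrite /= hC caddK.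
Qed.

Lemma leaf_count_wvar_gt0 x t c : 0 < leaf_count (wvar x) t c ->
  exists C, t = plug C (Var x) /\ ctx_class C = c.
Proof. by case/leaf_count_gt0 => C [y [-> hC]]; rewrite lt0b => /eqP ->; exists C. Qed.

Lemma node_count_gt0 t c : 0 < node_count t c ->
  exists C a b, t = plug C (Op a b) /\ ctx_class C = c.
Proof.
elim: t c => [//|a IHa b IHb] c /=.
rewrite !addn_gt0 => /orP[/orP[|/IHa[C [p [q [-> hC]]]]]|/IHb[C [p [q [-> hC]]]]].
- by rewrite lt0b => /eqP ->; exists Hole, a, b.
- by exists (CL C b), p, q; rewrite /= hC caddK.
- by exists (CR a C), p, q; rewrite /= hC caddK.
Qed.

Section Balance.
Local Open Scope ring_scope.

Definition phi (c : class) : int :=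
  if c == c00 then 2 else if c == c11 then -1 else 1.

(* The balances of the two children of a node add up to that of the node, except at
   nodes of class 11, where they exceed it by 3. *)
Lemma leaf_node_balance t c :
  (2 * leaf_count wall t c + leaf_count wall t (cadd c01 c) + leaf_count wall t (cadd c10 c))%N%:Z
    - (leaf_count wall t (cadd c11 c))%:Z
  = phi c + 3 * (node_count t (cadd c11 c))%:Z.
Proof.
elim: t c => [x|a IHa b IHb] c; first by case: c => [[] []].
have := IHa (cadd c10 c); have := IHb (cadd c01 c).
by case: c => [[] []]; rewrite /= /phi /cadd /=; lia.
Qed.

End Balance.

Lemma eval_subst (T : Type) (op : T -> T -> T) v s t :
  eval op v (subst s t) = eval op (fun n => eval op v (s n)) t.
Proof. by elim: t => //= a -> b ->. Qed.

Lemma derivable_sound (T : Type) (op : T -> T -> T) (E : identity -> Prop) s t :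
  (forall e, E e -> satisfies op e) -> derivable E s t -> forall v, eval op v s = eval op v t.
Proof.
move=> hE; elim=> {s t} [e /hE he s' v|//|t u _ h v|t u w _ h1 _ h2 v|t1 t2 u1 u2 _ h1 _ h2 v] /=.
- by rewrite !eval_subst.
- by rewrite h.
- by rewrite h1.
- by rewrite h1 h2.
Qed.

Section AbelianGroups.
Local Open Scope ring_scope.

Lemma Mfam_Sigma i : Sigma (Mfam i).
Proof.
move=> G; case: i => [[|[|[|[|[|[|//]]]]]] Hi]; rewrite /Mfam /=; split=> v /=;
rewrite ?opprD ?opprK ?addrA.
all: first [ by rewrite (ACl (((1*3)*2)*4)) | by rewrite (ACl (((4*2)*3)*1))
           | by rewrite (ACl (((1*4)*3)*2)) | by rewrite (ACl (((3*2)*1)*4)) ].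
Qed.

Lemma der_Sigma s t : der s t -> Sigma (s, t).
Proof.
move=> st G; have hG e : Mset e -> Sigma e by case=> i ->; apply: Mfam_Sigma.
by split=> v; apply: (derivable_sound _ st) => e /hG /(_ G) [].
Qed.

Let zval (w : nat -> nat) (n : nat) : int := (w n)%:Z.
Let lc w t c : int := (leaf_count w t c)%:Z.

Lemma eval_add w t : eval (fun x y : int => x + y) (zval w) t
  = lc w t c00 + lc w t c10 + lc w t c01 + lc w t c11.
Proof. by elim: t => [n|a IHa b IHb] /=; rewrite ?IHa ?IHb /lc /zval /= /cadd /=; lia. Qed.

Lemma eval_subr w t : eval (fun x y : int => x - y) (zval w) t
  = lc w t c00 + lc w t c10 - lc w t c01 - lc w t c11.
Proof. by elim: t => [n|a IHa b IHb] /=; rewrite ?IHa ?IHb /lc /zval /= /cadd /=; lia. Qed.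

Lemma eval_subl w t : eval (fun x y : int => - x + y) (zval w) t
  = lc w t c00 - lc w t c10 + lc w t c01 - lc w t c11.
Proof. by elim: t => [n|a IHa b IHb] /=; rewrite ?IHa ?IHb /lc /zval /= /cadd /=; lia. Qed.

Lemma eval_opp w t : eval (fun x y : int => - x - y) (zval w) t
  = lc w t c00 - lc w t c10 - lc w t c01 + lc w t c11.
Proof. by elim: t => [n|a IHa b IHb] /=; rewrite ?IHa ?IHb /lc /zval /= /cadd /=; lia. Qed.

Lemma Sigma_class_equiv e : Sigma e -> class_equiv e.1 e.2.
Proof.
case/(_ int) => h1 h2 h3 h4 w c.
move: (h1 (zval w)) (h2 (zval w)) (h3 (zval w)) (h4 (zval w)).
rewrite !eval_add !eval_subr !eval_subl !eval_opp /lc.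
by case: c => [[] []]; lia.
Qed.

End AbelianGroups.

Lemma der_class_equiv s t : der s t -> class_equiv s t.
Proof. by move/der_Sigma/Sigma_class_equiv. Qed.

Lemma der_swap C1 C2 X Z : compatible C1 C2 ->
  der (Op (plug C1 X) (plug C2 Z)) (Op (plug C1 Z) (plug C2 X)).
Proof. by move/compatible_swappable; apply. Qed.

Lemma no_leaf_at t t' C x c : der t t' -> leaf_count wall t c = 0 ->
  t' = plug C (Var x) -> ctx_class C <> c.
Proof.
move=> /der_class_equiv tt' t0 et' hC.
by move: (leaf_count_leaf wall C x); rewrite -et' hC -tt' t0.
Qed.

Lemma head_var_left t1 a b : 0 < leaf_count wall (Op t1 (Op a b)) c10 ->
  exists y u, der (Op t1 (Op a b)) (Op (Var y) u).
Proof.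
case/leaf_count_gt0 => C [x [e hC _]]; case: C e hC => [|C1 r|l C2] //= [-> er] hC.
  subst r; case: C1 hC => [|D q|p D] /= hC; first by exists x, (Op a b); apply: der_refl.
  - exists x, (plug (CR a D) (Op b q)); apply: der_trans (M2_der _ _ _ _) _.
    by apply: (der_swap (C1 := Hole) (C2 := CR a D)); move: hC; class_cases.
  - exists x, (plug (CL D b) (Op p a)); apply: der_trans (M1_der _ _ _ _) _.
    by apply: (der_swap (C1 := Hole) (C2 := CL D b)); move: hC; class_cases.
exists x, (plug C2 l); rewrite er.
by apply: (der_swap (C1 := Hole) (C2 := C2)); move: hC; class_cases.
Qed.

Lemma head_var_right a b t2 : 0 < leaf_count wall (Op (Op a b) t2) c01 ->
  exists u y, der (Op (Op a b) t2) (Op u (Var y)).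
Proof.
case/leaf_count_gt0 => C [x [e hC _]]; case: C e hC => [|C1 r|l C2] //= [el ->] hC.
  exists (plug C1 r), x; rewrite el.
  by apply: (der_swap (C1 := C1) (C2 := Hole)); move: hC; class_cases.
subst l; case: C2 hC => [|D q|p D] /= hC; first by exists (Op a b), x; apply: der_refl.
- exists (plug (CR a D) (Op b q)), x; apply: der_trans (M1_der _ _ _ _) _.
  by apply: (der_swap (C1 := CR a D) (C2 := Hole)); move: hC; class_cases.
- exists (plug (CL D b) (Op p a)), x; apply: der_trans (M2_der _ _ _ _) _.
  by apply: (der_swap (C1 := CL D b) (C2 := Hole)); move: hC; class_cases.
Qed.

Lemma leftmost_leaf t : exists C x, t = plug C (Var x) /\ (ctx_class C).2 = false.
Proof.
elim: t => [x|a [C [x [-> hC]]] b _]; first by exists Hole, x.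
by exists (CL C b), x; rewrite /= hC.
Qed.

Lemma head_leaf_pair p q a b :
  leaf_count wall (Op (Op p q) (Op a b)) c10 = 0 ->
  leaf_count wall (Op (Op p q) (Op a b)) c01 = 0 ->
  exists x y m, der (Op (Op p q) (Op a b)) (Op (Op (Var x) (Var y)) m).
Proof.
move=> t10 t01.
have [x [a' [b' dx]]] : exists x a' b', der (Op (Op p q) (Op a b)) (Op (Op (Var x) q) (Op a' b')).
  case: p t10 {t01} => [x|p1 p2] t10; first by exists x, a, b; apply: der_refl.
  have [C [x [ep hC]]] := leftmost_leaf (Op p1 p2).
  have d2 := M2_der (Op p1 p2) q a b.
  have hC0 : ctx_class C = c00.
    have : ctx_class (CR (Op b q) (CR a C)) <> c10 by apply: no_leaf_at d2 t10 _; rewrite ep.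
    by move: hC => /=; case: (ctx_class C) => [[] []].
  exists x, a, (plug C b); apply: der_trans d2 _; rewrite ep.
  by apply: (der_swap (C1 := CL Hole q) (C2 := CR a C)); rewrite /compatible /= hC0.
case: q dx t01 {t10} => [y|q1 q2] dx t01; first by exists x, y, (Op a' b').
have [C [y [eq' hC]]] := leftmost_leaf (Op q1 q2).
have d1 := der_trans dx (M1_der (Var x) (Op q1 q2) a' b').
have hC0 : ctx_class C = c00.
  have : ctx_class (CR (Op (Var x) a') (CL C b')) <> c01 by apply: no_leaf_at d1 t01 _; rewrite eq'.
  by move: hC => /=; case: (ctx_class C) => [[] []].
exists x, y, (Op (plug C a') b'); apply: der_trans d1 _; rewrite eq'.
by apply: (der_swap (C1 := CR (Var x) Hole) (C2 := CL C b')); rewrite /compatible /= hC0.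
Qed.

Lemma head_form t1 t2 :
  [\/ exists y u, der (Op t1 t2) (Op (Var y) u),
      exists u y, der (Op t1 t2) (Op u (Var y)) |
      [/\ leaf_count wall (Op t1 t2) c10 = 0, leaf_count wall (Op t1 t2) c01 = 0 &
          exists x y m, der (Op t1 t2) (Op (Op (Var x) (Var y)) m)]].
Proof.
case: t1 => [x|p q]; first by apply: Or31; exists x, t2; apply: der_refl.
case: t2 => [z|a b]; first by apply: Or32; exists (Op p q), z; apply: der_refl.
case: (posnP (leaf_count wall (Op (Op p q) (Op a b)) c10)) => [t10|/head_var_left]; last by apply: Or31.
case: (posnP (leaf_count wall (Op (Op p q) (Op a b)) c01)) => [t01|/head_var_right]; last by apply: Or32.
by apply: Or33; split; last apply: head_leaf_pair.
Qed.

Lemma leaf_count_head_left y u : 0 < leaf_count wall (Op (Var y) u) c10.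
Proof. by rewrite /= /cadd /= /wall. Qed.

Lemma leaf_count_head_right u y : 0 < leaf_count wall (Op u (Var y)) c01.
Proof. by rewrite /= /cadd /= /wall addn1. Qed.

Lemma class_equiv_sym s t : class_equiv s t -> class_equiv t s.
Proof. by move=> e w c; rewrite e. Qed.

Lemma class_equiv_trans s t u : class_equiv s t -> class_equiv t u -> class_equiv s u.
Proof. by move=> e1 e2 w c; rewrite e1 e2. Qed.

Lemma mixed_heads_leaves x u v z : class_equiv (Op (Var x) u) (Op v (Var z)) ->
  node_count (Op (Var x) u) c10 = 0 -> node_count (Op v (Var z)) c01 = 0 ->
  leaves u = 1 /\ leaves v = 1.
Proof.
move=> e sN tN.
move: (leaf_node_balance (Op (Var x) u) c01) (leaf_node_balance (Op v (Var z)) c10) sN tN.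
move: (e wall c00) (e wall c10) (e wall c01) (e wall c11) (leavesE u) (leavesE v).
by rewrite /= /cadd /= /phi /= /wall; lia.
Qed.

Section Completeness.
Variable n : nat.
Hypothesis IH : forall s t, leaves s <= n -> class_equiv s t -> der s t.

Lemma complete_var_left x u y v : leaves (Op (Var x) u) <= n.+1 ->
  class_equiv (Op (Var x) u) (Op (Var y) v) -> der (Op (Var x) u) (Op (Var y) v).
Proof.
move=> hs e; have hu : leaves u <= n by move: hs => /=; lia.
case: (eqVneq x y) e => [<-|xy] e; first exact: derR (IH hu (class_equiv_OpR e)).
have : 0 < leaf_count (wvar x) v c11.
  by move: (e (wvar x) c10); rewrite /= /cadd /= /wvar eqxx eq_sym (negbTE xy); lia.
case/leaf_count_wvar_gt0 => C [ev hC].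
have sw : der (Op (Var y) v) (Op (Var x) (plug C (Var y))).
  by rewrite ev; apply: (der_swap (C1 := Hole) (C2 := C)); rewrite /compatible /= hC.
apply: der_trans (der_sym sw); apply/derR/(IH hu).
exact: class_equiv_OpR (class_equiv_trans e (der_class_equiv sw)).
Qed.

Lemma complete_var_right u x v y : leaves (Op u (Var x)) <= n.+1 ->
  class_equiv (Op u (Var x)) (Op v (Var y)) -> der (Op u (Var x)) (Op v (Var y)).
Proof.
move=> hs e; have hu : leaves u <= n by move: hs => /=; lia.
case: (eqVneq x y) e => [<-|xy] e; first exact: derL (IH hu (class_equiv_OpL e)).
have : 0 < leaf_count (wvar x) v c11.
  by move: (e (wvar x) c01); rewrite /= /cadd /= /wvar eqxx eq_sym (negbTE xy); lia.
case/leaf_count_wvar_gt0 => C [ev hC].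
have sw : der (Op v (Var y)) (Op (plug C (Var y)) (Var x)).
  by rewrite ev; apply: (der_swap (C1 := C) (C2 := Hole)); rewrite /compatible /= hC.
apply: der_trans (der_sym sw); apply/derL/(IH hu).
exact: class_equiv_OpL (class_equiv_trans e (der_class_equiv sw)).
Qed.

Lemma complete_leaf_pair x y m x' y' m' : leaves (Op (Op (Var x) (Var y)) m) <= n.+1 ->
  class_equiv (Op (Op (Var x) (Var y)) m) (Op (Op (Var x') (Var y')) m') ->
  der (Op (Op (Var x) (Var y)) m) (Op (Op (Var x') (Var y')) m').
Proof.
move=> hs e; have hm : leaves m <= n by move: hs => /=; lia.
have [m2 dx] : exists m2, der (Op (Op (Var x') (Var y')) m') (Op (Op (Var x) (Var y')) m2).
  case: (eqVneq x' x) => [->|xx']; first by exists m'; apply: der_refl.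
  have : 0 < leaf_count (wvar x) m' c01.
    by move: (e (wvar x) c00); rewrite /= /cadd /= /wvar eqxx (negbTE xx'); lia.
  case/leaf_count_wvar_gt0 => C [em hC]; exists (plug C (Var x')); rewrite em.
  by apply: (der_swap (C1 := CL Hole (Var y')) (C2 := C)); rewrite /compatible /= hC.
have e2 := class_equiv_trans e (der_class_equiv dx).
have [m3 dy] : exists m3, der (Op (Op (Var x) (Var y')) m2) (Op (Op (Var x) (Var y)) m3).
  case: (eqVneq y' y) => [->|yy']; first by exists m2; apply: der_refl.
  have : 0 < leaf_count (wvar y) m2 c10.
    by move: (e2 (wvar y) c11); rewrite /= /cadd /= /wvar eqxx (negbTE yy'); lia.
  case/leaf_count_wvar_gt0 => C [em hC]; exists (plug C (Var y')); rewrite em.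
  by apply: (der_swap (C1 := CR (Var x) Hole) (C2 := C)); rewrite /compatible /= hC.
have e3 := class_equiv_trans e2 (der_class_equiv dy).
apply: der_trans (der_sym (der_trans dx dy)).
exact: derR (IH hm (class_equiv_OpR e3)).
Qed.

Lemma complete_mixed x u v z : leaves (Op (Var x) u) <= n.+1 ->
  class_equiv (Op (Var x) u) (Op v (Var z)) -> der (Op (Var x) u) (Op v (Var z)).
Proof.
move=> hs e; have ht := hs; rewrite (class_equiv_leaves e) in ht.
case: (posnP (node_count (Op (Var x) u) c10)) => [sN|/node_count_gt0[C [W1 [W2 []]]]]; last first.
  case: C => [|[] //|? C' [<- eu] hC] /=; first by case.
  have sw : der (Op (Var x) u) (Op (Op W1 W2) (plug C' (Var x))).
    by rewrite eu; apply: (der_swap (C1 := Hole) (C2 := C')); move: hC; class_cases.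
  have e' := class_equiv_trans (class_equiv_sym (der_class_equiv sw)) e.
  have [u' [y d]] : exists u' y, der (Op (Op W1 W2) (plug C' (Var x))) (Op u' (Var y)).
    by apply: head_var_right; rewrite e'; apply: leaf_count_head_right.
  have e'' := class_equiv_trans (class_equiv_sym (der_class_equiv d)) e'.
  apply: der_trans sw (der_trans d (complete_var_right _ e'')).
  by rewrite (class_equiv_leaves e'').
case: (posnP (node_count (Op v (Var z)) c01)) => [tN|/node_count_gt0[C [W1 [W2 []]]]]; last first.
  case: C => [|C' ? [ev <-] hC|? [] //] /=; first by case.
  have sw : der (Op v (Var z)) (Op (plug C' (Var z)) (Op W1 W2)).
    by rewrite ev; apply: (der_swap (C1 := C') (C2 := Hole)); move: hC; class_cases.
  have e' := class_equiv_trans e (der_class_equiv sw).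
  have [y [v' d]] : exists y v', der (Op (plug C' (Var z)) (Op W1 W2)) (Op (Var y) v').
    by apply: head_var_left; rewrite -e'; apply: leaf_count_head_left.
  have e'' := class_equiv_trans e' (der_class_equiv d).
  exact: der_trans (complete_var_left hs e'') (der_sym (der_trans sw d)).
have [lu lv] := mixed_heads_leaves e sN tN.
case: u lu e {hs ht sN} => [u0 _|u1 u2]; last by have := leaves_gt0 u1; have := leaves_gt0 u2 => /=; lia.
case: v lv {tN} => [v0 _|v1 v2]; last by have := leaves_gt0 v1; have := leaves_gt0 v2 => /=; lia.
move=> e; have xv : x = v0.
  by move: (e (wvar x) c10); rewrite /= /cadd /= /wvar eqxx; case: eqP.
subst v0; rewrite (class_equiv_Var (class_equiv_OpR e)); exact: der_refl.
Qed.

End Completeness.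

Lemma class_equiv_der s t : class_equiv s t -> der s t.
Proof.
move: {2}(leaves s) (leqnn (leaves s)) => n; elim: n s t => [|n IH] s t hs e.
  by have := leaves_gt0 s; lia.
case: s t hs e => [x|s1 s2] [y|t1 t2] hs e.
- by rewrite (class_equiv_Var e); apply: der_refl.
- by have := class_equiv_leaves e; have := leaves_gt0 t1; have := leaves_gt0 t2 => /=; lia.
- by have := class_equiv_leaves e; have := leaves_gt0 s1; have := leaves_gt0 s2 => /=; lia.
have normal s' t' : der (Op s1 s2) s' -> der (Op t1 t2) t' ->
    (leaves s' <= n.+1 -> class_equiv s' t' -> der s' t') -> der (Op s1 s2) (Op t1 t2).
  move=> ds dt h; have e' : class_equiv s' t'.
    exact: class_equiv_trans (class_equiv_sym (der_class_equiv ds)) (class_equiv_trans e (der_class_equiv dt)).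
  have hs' : leaves s' <= n.+1 by rewrite -(class_equiv_leaves (der_class_equiv ds)).
  exact: der_trans ds (der_trans (h hs' e') (der_sym dt)).
case: (head_form s1 s2) => [[y [u ds]]|[u [y ds]]|[s10 s01 [x [y [m ds]]]]];
case: (head_form t1 t2) => [[y' [u' dt]]|[u' [y' dt]]|[t10 t01 [x' [y' [m' dt]]]]];
eapply (normal _ _ ds dt); move=> hs' e'.
- exact (complete_var_left IH hs' e').
- exact (complete_mixed IH hs' e').
- by move: (leaf_count_head_left y u); rewrite e' -(der_class_equiv dt) t10.
- apply/der_sym/(complete_mixed IH _ (class_equiv_sym e')).
  by rewrite -(class_equiv_leaves e').
- exact (complete_var_right IH hs' e').
- by move: (leaf_count_head_right u y); rewrite e' -(der_class_equiv dt) t01.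
- by move: (leaf_count_head_left y' u'); rewrite -e' -(der_class_equiv ds) s10.
- by move: (leaf_count_head_right u' y'); rewrite -e' -(der_class_equiv ds) s01.
- exact (complete_leaf_pair IH hs' e').
Qed.

Lemma eq_eval (T : Type) (op : T -> T -> T) v v' t :
  (forall k, v k = v' k) -> eval op v t = eval op v' t.
Proof. by move=> vv'; elim: t => //= a -> b ->. Qed.

Definition zmul (tbl : seq (nat * nat * nat)) (a b : nat) : nat :=
  head 0 [seq p.2 | p <- tbl & p.1 == (a, b)].

(* The groupoid on {0,...,9} whose only nonzero products are the entries of [tbl]. *)
Definition zero_magma (tbl : seq (nat * nat * nat)) (a b : 'I_10) : 'I_10 :=
  inord (zmul tbl a b).

Lemma zmul_lt tbl a b : all (fun p => p.2 < 10) tbl -> zmul tbl a b < 10.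
Proof. by rewrite /zmul; elim: tbl => //= p tbl IH /andP[hp /IH]; case: ifP. Qed.

Lemma val_eval_zero_magma tbl v t : all (fun p => p.2 < 10) tbl ->
  eval (zero_magma tbl) v t = eval (zmul tbl) (fun k => v k) t :> nat.
Proof. by move=> htbl; elim: t => //= a <- b <-; rewrite inordK // zmul_lt. Qed.

Definition holds_below10 (op : nat -> nat -> nat) (e : identity) : bool :=
  let r := iota 0 10 in
  all (fun a => all (fun b => all (fun c => all (fun d =>
    eval op (nth d [:: a; b; c]) e.1 == eval op (nth d [:: a; b; c]) e.2) r) r) r) r.

Lemma eval_Mfam_first4 (T : Type) (op : T -> T -> T) v i :
  eval op v (Mfam i).1 = eval op (nth (v 3) [:: v 0; v 1; v 2]) (Mfam i).1 /\
  eval op v (Mfam i).2 = eval op (nth (v 3) [:: v 0; v 1; v 2]) (Mfam i).2.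
Proof. by case: i => [[|[|[|[|[|[|//]]]]]] ?]. Qed.

Lemma zero_magma_satisfies tbl i : all (fun p => p.2 < 10) tbl ->
  satisfies (zero_magma tbl) (Mfam i) <-> holds_below10 (zmul tbl) (Mfam i).
Proof.
move=> htbl; split=> [sat|chk v].
  apply/allP => a /[!mem_iota]/andP[_ ha]; apply/allP => b /[!mem_iota]/andP[_ hb].
  apply/allP => c /[!mem_iota]/andP[_ hc]; apply/allP => d /[!mem_iota]/andP[_ hd].
  have ew k : (inord (nth d [:: a; b; c] k) : 'I_10) = nth d [:: a; b; c] k :> nat.
    by case: k => [|[|[|k]]]; rewrite inordK //= nth_nil.
  have := congr1 (@nat_of_ord 10) (sat (fun k => inord (nth d [:: a; b; c] k))).
  by rewrite !val_eval_zero_magma // !(@eq_eval _ (zmul tbl) _ _ _ ew) => ->.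
apply: ord_inj; rewrite !val_eval_zero_magma //.
have [-> ->] := eval_Mfam_first4 (zmul tbl) (fun k => nat_of_ord (v k)) i.
have mem k : nat_of_ord (v k) \in iota 0 10 by rewrite mem_iota ltn_ord.
by move/allP: chk => /(_ _ (mem 0))/allP/(_ _ (mem 1))/allP/(_ _ (mem 2))/allP/(_ _ (mem 3))/eqP.
Qed.

Definition Mseq : seq identity := [:: M1; M2; M3; M4; M5; M6].

Lemma Mfam_nth i : Mfam i = nth M1 Mseq i.
Proof. by case: i => [[|[|[|[|[|[|//]]]]]] ?]. Qed.

Definition indep_table (i : nat) : seq (nat * nat * nat) :=
  match i with
  | 0 => [:: (1, 2, 5); (3, 4, 6); (5, 6, 7); (4, 2, 8); (3, 1, 9); (8, 9, 7)]
  | 1 => [:: (1, 2, 5); (3, 4, 6); (5, 6, 7); (1, 3, 8); (2, 4, 9); (8, 9, 7)]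
  | 2 => [:: (2, 3, 2); (3, 1, 2)]
  | 3 => [:: (2, 3, 5); (1, 5, 6); (6, 4, 7)]
  | 4 => [:: (3, 2, 5); (5, 1, 6); (4, 6, 7)]
  | _ => [:: (2, 3, 1); (3, 1, 1)]
  end.

Lemma indep_tables_separate : all (fun i =>
  [&& all (fun p => p.2 < 10) (indep_table i),
      ~~ holds_below10 (zmul (indep_table i)) (nth M1 Mseq i) &
      all (fun j => (j == i) || holds_below10 (zmul (indep_table i)) (nth M1 Mseq j)) (iota 0 6)])
  (iota 0 6).
Proof. by vm_compute. Qed.

Lemma Mfam_independent i : ~ consequence (Mset_but i) (Mfam i).
Proof.
have mem (k : 'I_6) : nat_of_ord k \in iota 0 6 by rewrite mem_iota ltn_ord.
move/allP: indep_tables_separate => /(_ _ (mem i)) /and3P[htbl fails others] hi.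
move: fails; rewrite -Mfam_nth => /negP; apply; apply/(iffLR (zero_magma_satisfies _ htbl)) => v.
apply: (derivable_sound _ hi) => _ [j [ji ->]].
apply/(iffRL (zero_magma_satisfies _ htbl)); rewrite Mfam_nth.
by move/allP: others => /(_ _ (mem j)); rewrite (inj_eq val_inj) (negbTE ji).
Qed.

Theorem theorem1p1 :
  basis_for Mset Sigma /\
  (forall i : 'I_6, Sigma (Mfam i)) /\
  (forall i : 'I_6, ~ consequence (Mset_but i) (Mfam i)).
Proof.
split; [|split].
- move=> [s t]; split; first exact: der_Sigma.
  by move/Sigma_class_equiv/class_equiv_der.
- exact: Mfam_Sigma.
- exact: Mfam_independent.
Qed.
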